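(* Let $Z>0$, let $W_{at}$ be as in the context with Taylor coefficients $(w_{2k})_{k\ge0}$, let $R_1,\dots,R_n$ be the radial atomic functions with eigenvalues $\epsilon_1,\dots,\epsilon_n$, $\mathcal R=(R_1,\dots,R_n)^T$, $\mathcal E=\mathrm{diag}(\epsilon_1,\dots,\epsilon_n)$, and let $(\zeta_j)_{j\ge0}\subset\mathbb R^n$ be the coefficients of the expansion of $\mathcal R$ at $0$. Then there exist real numbers $(\mu_j^{(k)})_{0\le j\le k\le n-1}$ and $(\nu_j^{(k)})_{0\le j\le k\le n-1}$ such that $$\zeta_{2k}=\sum_{j=0}^k\mu_j^{(k)}\mathcal E^j\zeta_0,\qquad\zeta_{2k+1}=\sum_{j=0}^k\nu_j^{(k)}\mathcal E^j\zeta_0,$$ with $\mu_k^{(k)}\ne0$ for every $0\le k\le n-1$. Moreover, $$\zeta_1=-Z\zeta_0,\qquad\zeta_2=-\tfrac13\mathcal E\zeta_0+\tfrac13(Z^2+w_0)\zeta_0,\qquad\zeta_3=\tfrac29Z\mathcal E\zeta_0-\Big(\tfrac{Z^3}{18}+\tfrac29Zw_0\Big)\zeta_0,$$ $$\zeta_4=\tfrac1{30}\mathcal E^2\zeta_0-\Big(\tfrac{Z^2}{18}+\tfrac{w_0}{15}\Big)\mathcal E\zeta_0+\Big(\tfrac{Z^4}{180}+\tfrac{Z^2w_0}{18}+\tfrac{w_0^2}{30}+\tfrac{w_2}{10}\Big)\zeta_0,$$ $$\zeta_5=-\tfrac{23}{1350}Z\mathcal E^2\zeta_0+\Big(\tfrac{Z^3}{135}+\tfrac{23}{675}w_0Z\Big)\mathcal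 E\zeta_0-\Big(\tfrac{Z^5}{2700}+\tfrac{Z^3w_0}{135}+\tfrac{23}{1350}Zw_0^2+\tfrac{11}{150}Zw_2\Big)\zeta_0.$$
   Context: $W_{at}$ is a smooth bounded real function on $[0,\infty)$ such that $\mathbf x\mapsto W_{at}(|\mathbf x|)$ is smooth on $\mathbb R^3$; hence for every $N$, $W_{at}(r)=\sum_{k=0}^Nw_{2k}r^{2k}+O(r^{2N+2})$ as $r\to0$, which defines the reals $w_{2k}$. For $k=1,\dots,n$, $\varphi_k(\mathbf x)=R_k(|\mathbf x|)Y_{00}$ ($Y_{00}=1/\sqrt{4\pi}$) are $L^2$-normalized eigenfunctions of the atomic Hamiltonian $-\frac12\Delta-\frac{Z}{|\mathbf x|}+W_{at}(|\mathbf x|)$ on $L^2(\mathbb R^3)$ with angular momentum $0$ and eigenvalues $\epsilon_k$; $R_k$ is continuous on $[0,\infty)$ and satisfies $-\frac12R_k''-\frac1rR_k'-\frac ZrR_k+W_{at}R_k=\epsilon_kR_k$ on $(0,\infty)$. The vectors $\zeta_j\in\mathbb R^n$ are the coefficients of the singular expansion of $\mathcal R$ at $r=0$: for every $N$, $\mathcal R(r)-\sum_{j=0}^N\zeta_jr^j=O(r^{N+1})$ as $r\to0^+$. *)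

From Stdlib Require Import Reals.
From Coquelicot Require Import Coquelicot.
Open Scope R_scope.

Definition bigO_0plus (f g : R -> R) : Prop :=
  exists C delta : R, 0 < delta /\
    forall r : R, 0 < r < delta -> Rabs (f r) <= C * Rabs (g r).

Definition smooth_R (f : R -> R) : Prop :=
  forall (m : nat) (x : R), ex_derive_n f m x.

(* The hypotheses on W_at: bounded on [0,oo), x |-> W(|x|) smooth
   (rendered via the even extension r |-> W(|r|) on R), and the Taylor
   coefficients w_{2k} = w k at 0. *)
Definition W_at_hyp (W : R -> R) (w : nat -> R) : Prop :=
  (exists M : R, forall r : R, 0 <= r -> Rabs (W r) <= M) /\
  smooth_R (fun r => W (Rabs r)) /\
  (forall N : nat,
     bigO_0plus (fun r => W r - sum_f_R0 (fun k => w k * r ^ (2 * k)) N)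
                (fun r => r ^ (2 * N + 2))).

(* Rk is an L^2-normalized radial (angular momentum 0) eigenfunction profile:
   continuous on [0,oo), C^2 on (0,oo), solving the radial equation
   -1/2 R'' - (1/r) R' - (Z/r) R + W R = eps R, and
   int_0^oo Rk(r)^2 r^2 dr = 1 (i.e. ||Rk Y00||_{L^2(R^3)} = 1). *)
Definition radial_eigen (Z : R) (W : R -> R) (eps : R) (Rk : R -> R) : Prop :=
  (forall r : R, 0 < r -> continuous Rk r) /\
  filterlim Rk (at_right 0) (locally (Rk 0)) /\
  (forall r : R, 0 < r -> ex_derive Rk r /\ ex_derive (Derive Rk) r) /\
  (forall r : R, 0 < r ->
     - / 2 * Derive (Derive Rk) r - / r * Derive Rk r - Z / r * Rk r
       + W r * Rk r = eps * Rk r) /\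
  is_RInt_gen (fun r => Rk r ^ 2 * r ^ 2) (at_point 0) (Rbar_locally p_infty) 1.

(* zeta j i = i-th component of zeta_j: R_i(r) - sum_{j<=N} zeta_j,i r^j = O(r^(N+1)). *)
Definition singular_expansion (Rk : R -> R) (zeta : nat -> R) : Prop :=
  forall N : nat,
    bigO_0plus (fun r => Rk r - sum_f_R0 (fun j => zeta j * r ^ j) N)
               (fun r => r ^ (N + 1)).

(* With u = r R the radial equation reads u'' = -2 Z R + 2 r (W - e) R on (0, oo).
   Asymptotic expansions at 0+ are stable under sums, products and multiplication by r, and
   the second difference u(3r) - 2 u(2r) + u(r) = r^2 u''(xi) lets one read off the
   coefficients of u from those of u''.  Comparing coefficients gives the recursion
     (m+1)(m+2) zeta_(m+1) = -2 Z zeta_m + 2 (sum_j w_j zeta_(m-1-j) - e zeta_(m-1)),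
   with w_j the Taylor coefficients of W.  It is linear in zeta_0, so zeta_m = Phi_m(e) zeta_0
   where Phi_m is a polynomial of degree at most m/2 depending only on Z and W; the term
   -2 e zeta_(m-1) alone raises the degree, so the leading coefficient of Phi_(2k) is
   (-2)^k / (2k+1)!. *)

From Stdlib Require Import Reals Lra Lia Factorial IndefiniteDescription.
From Coquelicot Require Import Coquelicot.
Open Scope R_scope.

(** * Asymptotic expansions at 0+ *)

Fixpoint trunc (a : nat -> R) (N : nat) (r : R) : R :=
  match N with O => 0 | S N => trunc a N r + a N * r ^ N end.

Definition mulX (a : nat -> R) (j : nat) : R := match j with O => 0 | S j => a j end.
Definition divX (a : nat -> R) (j : nat) : R := a (S j).
Definition deriv_coef (a : nat -> R) (j : nat) : R := INR (S j) * a (S j).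

Lemma trunc_ext a b N r :
  (forall j, (j < N)%nat -> a j = b j) -> trunc a N r = trunc b N r.
Proof.
  induction N as [|N IH]; intros Hab; simpl; [reflexivity|].
  rewrite IH, (Hab N); [reflexivity|lia|intros; apply Hab; lia].
Qed.

Lemma trunc_plus a b N r :
  trunc (fun j => a j + b j) N r = trunc a N r + trunc b N r.
Proof. induction N as [|N IH]; simpl; [ring|rewrite IH; ring]. Qed.

Lemma trunc_scal c a N r : trunc (fun j => c * a j) N r = c * trunc a N r.
Proof. induction N as [|N IH]; simpl; [ring|rewrite IH; ring]. Qed.

Lemma trunc_divX a N r : trunc a (S N) r = a 0%nat + r * trunc (divX a) N r.
Proof.
  induction N as [|N IH]; [simpl; ring|].
  change (trunc a (S N) r + a (S N) * r ^ S N
          = a 0%nat + r * (trunc (divX a) N r + a (S N) * r ^ N)).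
  rewrite IH. simpl. ring.
Qed.

Lemma trunc_scale_arg a N k r : trunc a N (k * r) = trunc (fun j => a j * k ^ j) N r.
Proof. induction N as [|N IH]; simpl; [ring|rewrite IH, Rpow_mult_distr; ring]. Qed.

Lemma trunc_sum_f_R0 a N r : trunc a (S N) r = sum_f_R0 (fun j => a j * r ^ j) N.
Proof.
  induction N as [|N IH]; [simpl; ring|].
  cbn [trunc sum_f_R0] in *. rewrite IH. reflexivity.
Qed.

Lemma trunc_derive a N x : is_derive (trunc a (S N)) x (trunc (deriv_coef a) N x).
Proof.
  induction N as [|N IH].
  - apply (is_derive_ext (fun r => 0 + a 0%nat * r ^ 0)); [reflexivity|].
    auto_derive; [exact I|]. simpl. ring.
  - apply (is_derive_ext (fun r => trunc a (S N) r + a (S N) * r ^ S N)); [reflexivity|].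
    apply (is_derive_plus (trunc a (S N)) (fun r => a (S N) * r ^ S N)); [exact IH|].
    auto_derive; [exact I|]. unfold deriv_coef. simpl. ring.
Qed.

Definition is_expansion (f : R -> R) (a : nat -> R) (N : nat) : Prop :=
  exists C delta, 0 < delta /\
    forall r, 0 < r < delta -> Rabs (f r - trunc a N r) <= C * r ^ N.

Lemma is_expansion_ext f g a b N :
  (forall r, 0 < r -> f r = g r) -> (forall j, (j < N)%nat -> a j = b j) ->
  is_expansion f a N -> is_expansion g b N.
Proof.
  intros Hfg Hab [C [d [Hd H]]]. exists C, d. split; [exact Hd|].
  intros r Hr. rewrite <- Hfg, <- (trunc_ext a b) by (auto; lra). exact (H r Hr).
Qed.

Lemma is_expansion_trunc a N : is_expansion (trunc a N) a N.
Proof.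
  exists 0, 1. split; [lra|]. intros r _.
  rewrite Rminus_diag, Rabs_R0. lra.
Qed.

Lemma is_expansion_plus f g a b N :
  is_expansion f a N -> is_expansion g b N ->
  is_expansion (fun r => f r + g r) (fun j => a j + b j) N.
Proof.
  intros [C [d [Hd H]]] [C' [d' [Hd' H']]]. exists (C + C'), (Rmin d d').
  split; [apply Rmin_glb_lt; lra|]. intros r [Hr0 Hr].
  apply Rmin_Rgt in Hr. specialize (H r ltac:(lra)). specialize (H' r ltac:(lra)).
  rewrite trunc_plus.
  replace (f r + g r - (trunc a N r + trunc b N r))
    with ((f r - trunc a N r) + (g r - trunc b N r)) by ring.
  eapply Rle_trans; [apply Rabs_triang|lra].
Qed.

Lemma is_expansion_scal c f a N :
  is_expansion f a N -> is_expansion (fun r => c * f r) (fun j => c * a j) N.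
Proof.
  intros [C [d [Hd H]]]. exists (Rabs c * C), d. split; [exact Hd|]. intros r Hr.
  rewrite trunc_scal, <- Rmult_minus_distr_l, Rabs_mult, Rmult_assoc.
  apply Rmult_le_compat_l; [apply Rabs_pos|exact (H r Hr)].
Qed.

Lemma is_expansion_S f a N :
  is_expansion f a (S N) <->
  is_expansion (fun r => (f r - a 0%nat) / r) (divX a) N.
Proof.
  assert (Hrem : forall r, 0 < r -> Rabs (f r - trunc a (S N) r)
                   = r * Rabs ((f r - a 0%nat) / r - trunc (divX a) N r)).
  { intros r Hr. rewrite trunc_divX.
    replace (f r - (a 0%nat + r * trunc (divX a) N r))
      with (r * ((f r - a 0%nat) / r - trunc (divX a) N r)) by (field; lra).
    rewrite Rabs_mult, Rabs_pos_eq by lra. reflexivity. }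
  split; intros [C [d [Hd H]]]; exists C, d; split; auto; intros r Hr;
    specialize (H r Hr); rewrite ?Hrem in * by lra; simpl in *.
  - apply (Rmult_le_reg_l r); [lra|]. lra.
  - replace (C * (r * r ^ N)) with (r * (C * r ^ N)) by ring.
    apply Rmult_le_compat_l; lra.
Qed.

Lemma is_expansion_mulX f a N :
  is_expansion f a N -> is_expansion (fun r => r * f r) (mulX a) (S N).
Proof.
  intros H. apply is_expansion_S.
  apply (is_expansion_ext f _ a); [|reflexivity|exact H].
  intros r Hr. simpl. field. lra.
Qed.

Lemma is_expansion_pred f a N : is_expansion f a (S N) -> is_expansion f a N.
Proof.
  intros [C [d [Hd H]]]. exists (Rabs C + Rabs (a N)), (Rmin d 1).
  split; [apply Rmin_glb_lt; lra|]. intros r [Hr0 Hr].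
  apply Rmin_Rgt in Hr. specialize (H r ltac:(lra)). simpl in H.
  assert (HrN : 0 <= r ^ N) by (apply pow_le; lra).
  assert (HC : C * (r * r ^ N) <= Rabs C * r ^ N).
  { pose proof (Rle_abs C). pose proof (Rabs_pos C).
    assert (0 <= (Rabs C - C) * (r * r ^ N)) by (apply Rmult_le_pos; nra).
    assert (0 <= Rabs C * ((1 - r) * r ^ N)) by (apply Rmult_le_pos; nra).
    nra. }
  replace (f r - trunc a N r)
    with ((f r - (trunc a N r + a N * r ^ N)) + a N * r ^ N) by ring.
  eapply Rle_trans; [apply Rabs_triang|].
  rewrite Rabs_mult, (Rabs_pos_eq (r ^ N)) by exact HrN. lra.
Qed.

Lemma is_expansion_le f a K N :
  (K <= N)%nat -> is_expansion f a N -> is_expansion f a K.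
Proof. induction 1; auto using is_expansion_pred. Qed.

Lemma eq_of_dist_le_lin x y C d :
  0 < d -> (forall r, 0 < r < d -> Rabs (x - y) <= C * r) -> x = y.
Proof.
  intros Hd H. apply Rminus_diag_uniq, Rabs_eq_0, Rle_antisym; [|apply Rabs_pos].
  apply le_epsilon. intros eps Heps.
  pose proof (Rabs_pos C) as HC. pose proof (Rle_abs C).
  set (r := Rmin (d / 2) (eps / (Rabs C + 1))).
  assert (Hr0 : 0 < r) by (apply Rmin_glb_lt; apply Rdiv_lt_0_compat; lra).
  assert (Hrd : r <= d / 2) by apply Rmin_l.
  assert (Hreps : (Rabs C + 1) * r <= eps).
  { apply (Rmult_le_reg_l (/ (Rabs C + 1))); [apply Rinv_0_lt_compat; lra|].
    rewrite <- Rmult_assoc, Rinv_l, Rmult_1_l by lra.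
    rewrite Rmult_comm. apply Rmin_r. }
  specialize (H r ltac:(lra)). nra.
Qed.

Lemma is_expansion_unique f a b N :
  is_expansion f a N -> is_expansion f b N -> forall j, (j < N)%nat -> a j = b j.
Proof.
  revert f a b. induction N as [|N IH]; intros f a b Ha Hb j Hj; [lia|].
  assert (H0 : a 0%nat = b 0%nat).
  { destruct (is_expansion_le f a 1 (S N) ltac:(lia) Ha) as [C [d [Hd Ha1]]].
    destruct (is_expansion_le f b 1 (S N) ltac:(lia) Hb) as [C' [d' [Hd' Hb1]]].
    apply (eq_of_dist_le_lin _ _ (C + C') (Rmin d d')); [apply Rmin_glb_lt; lra|].
    intros r [Hr0 Hr]. apply Rmin_Rgt in Hr.
    specialize (Ha1 r ltac:(lra)). specialize (Hb1 r ltac:(lra)). simpl in Ha1, Hb1.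
    replace (a 0%nat - b 0%nat)
      with ((f r - (0 + b 0%nat * 1)) - (f r - (0 + a 0%nat * 1))) by ring.
    eapply Rle_trans; [apply Rabs_triang|]. rewrite Rabs_Ropp. lra. }
  destruct j as [|j]; [exact H0|].
  apply (IH (fun r => (f r - a 0%nat) / r) (divX a) (divX b)); [| |lia].
  - apply is_expansion_S, Ha.
  - rewrite H0. apply is_expansion_S, Hb.
Qed.

Definition conv (a b : nat -> R) (m : nat) : R :=
  sum_f_R0 (fun j => a j * b (m - j)%nat) m.

Lemma conv_Sl a b k : conv a b (S k) = a 0%nat * b (S k) + conv (divX a) b k.
Proof. unfold conv. rewrite decomp_sum by lia. reflexivity. Qed.

Lemma conv_last a b k : conv a b k = a k * b 0%nat + mulX (conv a (divX b)) k.
Proof.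
  destruct k as [|k]; [unfold conv, mulX; simpl; ring|].
  unfold conv, mulX. rewrite tech5, Nat.sub_diag, Rplus_comm. f_equal.
  apply sum_eq. intros j Hj. unfold divX. rewrite Nat.sub_succ_l by exact Hj. reflexivity.
Qed.

Lemma conv_S a b k :
  conv a b (S k) = a 0%nat * divX b k + b 0%nat * divX a k
                   + mulX (conv (divX a) (divX b)) k.
Proof. rewrite conv_Sl, conv_last. unfold divX. ring. Qed.

Lemma is_expansion_mult f g a b N :
  is_expansion f a N -> is_expansion g b N ->
  is_expansion (fun r => f r * g r) (conv a b) N.
Proof.
  revert f g a b. induction N as [|N IH]; intros f g a b Hf Hg.
  - destruct Hf as [C [d [Hd Hf]]], Hg as [C' [d' [Hd' Hg]]].
    exists (C * C'), (Rmin d d'). split; [apply Rmin_glb_lt; lra|].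
    intros r [Hr0 Hr]. apply Rmin_Rgt in Hr.
    specialize (Hf r ltac:(lra)). specialize (Hg r ltac:(lra)). simpl in *.
    rewrite Rminus_0_r, Rmult_1_r, Rabs_mult in *.
    apply Rmult_le_compat; auto using Rabs_pos.
  - apply is_expansion_S in Hf, Hg. apply is_expansion_S.
    set (tf := fun r => (f r - a 0%nat) / r) in Hf.
    set (tg := fun r => (g r - b 0%nat) / r) in Hg.
    apply (is_expansion_ext
      (fun r => (a 0%nat * tg r + b 0%nat * tf r) + r * (tf r * tg r)) _
      (fun j => (a 0%nat * divX b j + b 0%nat * divX a j)
                + mulX (conv (divX a) (divX b)) j)).
    + intros r Hr. unfold tf, tg, conv. simpl. field. lra.
    + intros j _. symmetry. apply conv_S.
    + apply is_expansion_plus.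
      * apply is_expansion_plus; apply is_expansion_scal; assumption.
      * apply is_expansion_pred, is_expansion_mulX, IH; assumption.
Qed.

Lemma is_expansion_scale_arg k f a N :
  0 < k -> is_expansion f a N ->
  is_expansion (fun r => f (k * r)) (fun j => a j * k ^ j) N.
Proof.
  intros Hk [C [d [Hd H]]]. exists (C * k ^ N), (d / k).
  split; [apply Rdiv_lt_0_compat; lra|]. intros r [Hr0 Hr].
  assert (Hkr : k * r < d).
  { apply (Rmult_lt_compat_l k) in Hr; [|lra]. field_simplify in Hr; lra. }
  rewrite <- trunc_scale_arg, Rmult_assoc, <- Rpow_mult_distr.
  apply H. split; [apply Rmult_lt_0_compat|]; lra.
Qed.

(** * Second differences *)

Definition second_diff_coef (j : nat) : R := 3 ^ j - 2 * 2 ^ j + 1.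

Lemma second_diff_coef_pos j : (2 <= j)%nat -> 0 < second_diff_coef j.
Proof.
  intros Hj. unfold second_diff_coef.
  assert (H : 2 * 2 ^ j <= 3 ^ j).
  { induction Hj as [|j Hj IH]; [simpl; lra|].
    simpl. pose proof (pow_le 2 j). lra. }
  lra.
Qed.

Lemma is_expansion_second_diff g b N :
  is_expansion g b N ->
  is_expansion (fun r => g (3 * r) - 2 * g (2 * r) + g r)
               (fun j => b j * second_diff_coef j) N.
Proof.
  intros H.
  apply (is_expansion_ext
    (fun r => g (3 * r) + (-2 * g (2 * r) + g r))
    _ (fun j => b j * 3 ^ j + (-2 * (b j * 2 ^ j) + b j))).
  - intros r _. ring.
  - intros j _. unfold second_diff_coef. ring.
  - apply is_expansion_plus; [apply is_expansion_scale_arg; [lra|exact H]|].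
    apply is_expansion_plus; [apply is_expansion_scal|exact H].
    apply is_expansion_scale_arg; [lra|exact H].
Qed.

Lemma trunc_zero N r : trunc (fun _ => 0) N r = 0.
Proof. induction N as [|N IH]; simpl; [reflexivity|rewrite IH; ring]. Qed.

Lemma second_diff_mvt (g g1 g2 : R -> R) (r : R) :
  0 < r ->
  (forall x, 0 < x -> is_derive g x (g1 x)) ->
  (forall x, 0 < x -> is_derive g1 x (g2 x)) ->
  exists xi, r <= xi <= 3 * r /\ g (3 * r) - 2 * g (2 * r) + g r = r ^ 2 * g2 xi.
Proof.
  intros Hr Hg Hg1.
  assert (Hcont : forall (f df : R -> R) x,
            (forall y, 0 < y -> is_derive f y (df y)) -> 0 < x -> continuity_pt f x).
  { intros f df x Hf Hx. apply continuity_pt_filterlim, (ex_derive_continuous f x).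
    exists (df x). exact (Hf x Hx). }
  set (h := fun y => g (y + r) - g y).
  assert (Hh : forall y, 0 < y -> is_derive h y (g1 (y + r) - g1 y)).
  { intros y Hy. apply (is_derive_minus (fun y => g (y + r)) g); [|apply Hg; lra].
    rewrite <- (scal_one (g1 (y + r))).
    apply (is_derive_comp g (fun y => y + r)); [apply Hg; lra|].
    auto_derive; [exact I|reflexivity]. }
  destruct (MVT_gen h r (2 * r) (fun y => g1 (y + r) - g1 y)) as [eta [Heta Hh_eq]].
  { intros y Hy. rewrite Rmin_left in Hy by lra. apply Hh. lra. }
  { intros y Hy. rewrite Rmin_left in Hy by lra. apply (Hcont h _ y Hh). lra. }
  rewrite Rmin_left, Rmax_right in Heta by lra.
  destruct (MVT_gen g1 eta (eta + r) g2) as [xi [Hxi Hg1_eq]].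
  { intros y Hy. rewrite Rmin_left in Hy by lra. apply Hg1. lra. }
  { intros y Hy. rewrite Rmin_left in Hy by lra. apply (Hcont g1 g2 y Hg1). lra. }
  rewrite Rmin_left, Rmax_right in Hxi by lra.
  exists xi. split; [lra|]. unfold h in Hh_eq.
  replace (2 * r + r) with (3 * r) in Hh_eq by ring.
  replace (r + r) with (2 * r) in Hh_eq by ring.
  rewrite Hg1_eq in Hh_eq. lra.
Qed.

Lemma is_expansion_second_diff_zero (g g1 g2 : R -> R) C d N :
  0 < d ->
  (forall x, 0 < x -> is_derive g x (g1 x)) ->
  (forall x, 0 < x -> is_derive g1 x (g2 x)) ->
  (forall x, 0 < x < d -> Rabs (g2 x) <= C * x ^ N) ->
  is_expansion (fun r => g (3 * r) - 2 * g (2 * r) + g r) (fun _ => 0) (S (S N)).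
Proof.
  intros Hd Hg Hg1 Hg2. exists (Rabs C * 3 ^ N), (d / 3).
  split; [lra|]. intros r Hr.
  destruct (second_diff_mvt g g1 g2 r ltac:(lra) Hg Hg1) as [xi [Hxi ->]].
  rewrite trunc_zero, Rminus_0_r, Rabs_mult, (Rabs_pos_eq (r ^ 2)) by (apply pow_le; lra).
  assert (Hbound : Rabs (g2 xi) <= Rabs C * (3 * r) ^ N).
  { eapply Rle_trans; [apply Hg2; lra|].
    eapply Rle_trans; [apply Rmult_le_compat_r; [apply pow_le; lra|apply Rle_abs]|].
    apply Rmult_le_compat_l; [apply Rabs_pos|apply pow_incr; lra]. }
  rewrite Rpow_mult_distr in Hbound.
  replace (Rabs C * 3 ^ N * r ^ S (S N)) with (r ^ 2 * (Rabs C * (3 ^ N * r ^ N)))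
    by (simpl; ring).
  apply Rmult_le_compat_l; [apply pow_le; lra|exact Hbound].
Qed.

Definition int2_coef (c : nat -> R) (j : nat) : R :=
  match j with S (S j) => c j / (INR (S j) * INR (S (S j))) | _ => 0 end.

Lemma deriv_coef_int2_coef c j : deriv_coef (deriv_coef (int2_coef c)) j = c j.
Proof. unfold deriv_coef, int2_coef. field. split; apply not_0_INR; lia. Qed.

(* Subtracting the exact double antiderivative of the expansion of [F] leaves a
   function whose second differences are [O(r^(N+2))], which forces the
   matching coefficients, as [second_diff_coef j <> 0] for [j >= 2]. *)
Lemma is_expansion_deriv2_coef (u u1 F : R -> R) e c N :
  (forall r, 0 < r -> is_derive u r (u1 r)) ->
  (forall r, 0 < r -> is_derive u1 r (F r)) ->
  is_expansion u e (S (S N)) -> is_expansion F c N ->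
  forall j, (j < N)%nat -> e (S (S j)) = c j / (INR (S j) * INR (S (S j))).
Proof.
  intros Hu Hu1 He [C [d [Hd HF]]] j Hj.
  set (p := int2_coef c).
  set (g := fun r => u r - trunc p (S (S N)) r).
  assert (Hg : is_expansion g (fun j => e j - p j) (S (S N))).
  { apply (is_expansion_ext (fun r => u r + -1 * trunc p (S (S N)) r) _
                            (fun j => e j + -1 * p j)); [intros; unfold g; ring|intros; ring|].
    apply is_expansion_plus; [exact He|apply is_expansion_scal, is_expansion_trunc]. }
  assert (Hg0 : is_expansion (fun r => g (3 * r) - 2 * g (2 * r) + g r)
                             (fun _ => 0) (S (S N))).
  { apply (is_expansion_second_diff_zero g (fun r => u1 r - trunc (deriv_coef p) (S N) r)
             (fun r => F r - trunc c N r) C d N Hd); [intros x Hx..|exact HF].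
    - apply (is_derive_minus u (trunc p (S (S N)))); [auto|apply trunc_derive].
    - apply (is_derive_minus u1 (trunc (deriv_coef p) (S N))); [auto|].
      rewrite <- (trunc_ext (deriv_coef (deriv_coef p)))
        by (intros; apply deriv_coef_int2_coef).
      apply trunc_derive. }
  pose proof (is_expansion_unique _ _ _ _ (is_expansion_second_diff g _ _ Hg) Hg0
                (S (S j)) ltac:(lia)) as H.
  pose proof (second_diff_coef_pos (S (S j)) ltac:(lia)).
  apply Rmult_integral in H. destruct H as [H|H]; [|lra].
  unfold p, int2_coef in H. lra.
Qed.

(** * The coefficient recursion *)

Lemma bigO_0plus_is_expansion (f g : R -> R) a N :
  (forall r, 0 < r -> g r = f r - trunc a N r) ->
  bigO_0plus g (fun r => r ^ N) -> is_expansion f a N.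
Proof.
  intros Hg [C [d [Hd H]]]. exists C, d. split; [exact Hd|]. intros r Hr.
  rewrite <- Hg, <- (Rabs_pos_eq (r ^ N)) by (try apply pow_le; lra). exact (H r Hr).
Qed.

Lemma singular_expansion_is_expansion Rk a N :
  singular_expansion Rk a -> is_expansion Rk a N.
Proof.
  intros H. apply is_expansion_pred.
  apply (bigO_0plus_is_expansion _ (fun r => Rk r - sum_f_R0 (fun j => a j * r ^ j) N)).
  - intros r _. rewrite trunc_sum_f_R0. reflexivity.
  - rewrite <- Nat.add_1_r. exact (H N).
Qed.

Definition even_coef (w : nat -> R) (j : nat) : R :=
  if Nat.even j then w (Nat.div2 j) else 0.

Lemma trunc_even_coef w N r :
  trunc (even_coef w) (2 * N + 2) r = sum_f_R0 (fun k => w k * r ^ (2 * k)) N.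
Proof.
  induction N as [|N IH]; [unfold even_coef; simpl; ring|].
  replace (2 * S N + 2)%nat with (S (S (2 * S N))) by lia.
  change (trunc (even_coef w) (2 * S N) r
          + even_coef w (2 * S N) * r ^ (2 * S N)
          + even_coef w (S (2 * S N)) * r ^ S (2 * S N)
          = sum_f_R0 (fun k => w k * r ^ (2 * k)) (S N)).
  replace (2 * S N)%nat with (2 * N + 2)%nat at 1 by lia.
  rewrite IH, tech5. unfold even_coef.
  rewrite Nat.even_succ, Nat.odd_mul, Nat.even_mul, Nat.div2_double. simpl. ring.
Qed.

Lemma W_at_hyp_is_expansion W w N : W_at_hyp W w -> is_expansion W (even_coef w) N.
Proof.
  intros [_ [_ H]]. apply (is_expansion_le _ _ N (2 * N + 2)); [lia|].
  apply (bigO_0plus_is_expansion _ (fun r => W r - sum_f_R0 (fun k => w k * r ^ (2 * k)) N)).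
  - intros r _. rewrite trunc_even_coef. reflexivity.
  - exact (H N).
Qed.

Definition radial_step (Z : R) (w : nat -> R) (e : R) (a : nat -> R) (m : nat) : R :=
  (-2 * Z * a m + 2 * mulX (fun j => conv (even_coef w) a j - e * a j) m)
  / (INR (S m) * INR (S (S m))).

Lemma singular_coef_rec Z W w e Rk a :
  W_at_hyp W w -> radial_eigen Z W e Rk -> singular_expansion Rk a ->
  forall m, a (S m) = radial_step Z w e a m.
Proof.
  intros HW [_ [_ [Hder [Hode _]]]] Hsing m.
  assert (HR : forall N, is_expansion Rk a N)
    by (intros; apply singular_expansion_is_expansion, Hsing).
  apply (is_expansion_deriv2_coef (fun r => r * Rk r) (fun r => Rk r + r * Derive Rk r)
    (fun r => -2 * Z * Rk r + 2 * (r * (W r * Rk r - e * Rk r))) (mulX a)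
    (fun j => -2 * Z * a j + 2 * mulX (fun j => conv (even_coef w) a j - e * a j) j)
    (S m)); [intros r Hr|intros r Hr| | |lia].
  - destruct (Hder r Hr) as [HR1 _]. auto_derive; [exact HR1|].
    change (fun x => Rk x) with Rk. ring.
  - destruct (Hder r Hr) as [HR1 HR2]. specialize (Hode r Hr).
    auto_derive; [tauto|].
    change (fun x => Rk x) with Rk. change (fun x => Derive Rk x) with (Derive Rk).
    replace (Derive (Derive Rk) r)
      with (2 * (- / r * Derive Rk r - Z / r * Rk r + W r * Rk r - e * Rk r)) by lra.
    field. lra.
  - apply is_expansion_mulX, HR.
  - apply is_expansion_plus; [apply is_expansion_scal, HR|].
    apply is_expansion_scal, is_expansion_pred, is_expansion_mulX.
    apply (is_expansion_ext (fun r => W r * Rk r + - e * Rk r) _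
             (fun j => conv (even_coef w) a j + - e * a j)); [intros; ring..|].
    apply is_expansion_plus; [|apply is_expansion_scal, HR].
    apply is_expansion_mult; [apply W_at_hyp_is_expansion, HW|apply HR].
Qed.

(** * Polynomial dependence on the eigenvalue *)

Section CourseOfValues.

Variable step : (nat -> R) -> nat -> R.
Hypothesis step_local : forall (h h' : nat -> R) m,
  (forall l, (l <= m)%nat -> h l = h' l) -> step h m = step h' m.

(* [cov_prefix x0 m] agrees with the solution on [0, m] only. *)
Fixpoint cov_prefix (x0 : R) (m : nat) : nat -> R :=
  match m with
  | O => fun _ => x0
  | S m => let h := cov_prefix x0 m in fun l => if (l <=? m)%nat then h l else step h m
  end.

Definition cov_seq (x0 : R) (m : nat) : R := cov_prefix x0 m m.

Lemma cov_seq_S_prefix x0 m : cov_seq x0 (S m) = step (cov_prefix x0 m) m.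
Proof.
  change (cov_seq x0 (S m))
    with (if (S m <=? m)%nat then cov_prefix x0 m (S m) else step (cov_prefix x0 m) m).
  rewrite (proj2 (Nat.leb_gt (S m) m)) by lia. reflexivity.
Qed.

Lemma cov_prefix_eq x0 m l : (l <= m)%nat -> cov_prefix x0 m l = cov_seq x0 l.
Proof.
  induction m as [|m IH]; intros Hl; [replace l with 0%nat by lia; reflexivity|].
  simpl. destruct (Nat.leb_spec l m) as [Hlm|Hlm]; [exact (IH Hlm)|].
  replace l with (S m) by lia. symmetry. apply cov_seq_S_prefix.
Qed.

Lemma cov_seq_S x0 m : cov_seq x0 (S m) = step (cov_seq x0) m.
Proof. rewrite cov_seq_S_prefix. apply step_local. intros. apply cov_prefix_eq. assumption. Qed.

Lemma cov_seq_unique (a : nat -> R) :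
  (forall m, a (S m) = step a m) -> forall m, a m = cov_seq (a 0%nat) m.
Proof.
  intros Ha m. induction m as [m IH] using Wf_nat.lt_wf_ind.
  destruct m as [|m]; [reflexivity|].
  rewrite Ha, cov_seq_S. apply step_local. intros l Hl. apply IH. lia.
Qed.

End CourseOfValues.

Lemma conv_ext a h h' m :
  (forall l, (l <= m)%nat -> h l = h' l) -> conv a h m = conv a h' m.
Proof. intros H. apply sum_eq. intros j Hj. rewrite H by lia. reflexivity. Qed.

Lemma conv_scal_r a h c m : conv a (fun l => h l * c) m = conv a h m * c.
Proof. unfold conv. rewrite Rmult_comm, scal_sum. apply sum_eq. intros. ring. Qed.

Lemma radial_step_local Z w e (h h' : nat -> R) m :
  (forall l, (l <= m)%nat -> h l = h' l) -> radial_step Z w e h m = radial_step Z w e h' m.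
Proof.
  intros H. unfold radial_step. rewrite (H m) by lia.
  destruct m as [|m]; [reflexivity|]. cbn [mulX].
  rewrite (H m) by lia. rewrite (conv_ext _ h h') by (intros; apply H; lia). reflexivity.
Qed.

Lemma radial_step_scal Z w e h c m :
  radial_step Z w e (fun l => h l * c) m = radial_step Z w e h m * c.
Proof.
  unfold radial_step, Rdiv. destruct m as [|m]; cbn [mulX]; [ring|].
  rewrite conv_scal_r. ring.
Qed.

Definition radial_coef (Z : R) (w : nat -> R) (e : R) : nat -> R :=
  cov_seq (radial_step Z w e) 1.

Lemma radial_coef_S Z w e m :
  radial_coef Z w e (S m) = radial_step Z w e (radial_coef Z w e) m.
Proof. apply cov_seq_S, radial_step_local. Qed.

Lemma radial_coef_scaled Z w e a :
  (forall m, a (S m) = radial_step Z w e a m) ->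
  forall m, a m = radial_coef Z w e m * a 0%nat.
Proof.
  intros Ha m.
  pose proof (cov_seq_unique _ (radial_step_local Z w e)
                (fun m => radial_coef Z w e m * a 0%nat)) as Hb. cbv beta in Hb.
  rewrite Hb, (cov_seq_unique _ (radial_step_local Z w e) a Ha m).
  - f_equal. unfold radial_coef, cov_seq. simpl. ring.
  - intros k. rewrite radial_step_scal, radial_coef_S. reflexivity.
Qed.

Lemma radial_coef_SS Z w e m :
  radial_coef Z w e (S (S m)) =
  (-2 * Z * radial_coef Z w e (S m)
   + 2 * (conv (even_coef w) (radial_coef Z w e) m - e * radial_coef Z w e m))
  / (INR (S (S m)) * INR (S (S (S m)))).
Proof. apply radial_coef_S. Qed.

Definition is_poly_lead (d : nat) (L : R) (f : R -> R) : Prop :=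
  exists c, c d = L /\ forall x, f x = trunc c (S d) x.

Definition is_poly (d : nat) (f : R -> R) : Prop := exists L, is_poly_lead d L f.

Lemma is_poly_lead_ext d L L' (f g : R -> R) :
  L = L' -> (forall x, f x = g x) -> is_poly_lead d L f -> is_poly_lead d L' g.
Proof.
  intros <- Hfg [c [Hc Hf]]. exists c. split; [exact Hc|]. intros x. rewrite <- Hfg. apply Hf.
Qed.

Lemma is_poly_lead_const k : is_poly_lead 0 k (fun _ => k).
Proof. exists (fun _ => k). split; [reflexivity|]. intros x. simpl. ring. Qed.

Lemma is_poly_lead_plus d L1 L2 (f g : R -> R) :
  is_poly_lead d L1 f -> is_poly_lead d L2 g ->
  is_poly_lead d (L1 + L2) (fun x => f x + g x).
Proof.
  intros [c1 [Hc1 Hf]] [c2 [Hc2 Hg]]. exists (fun j => c1 j + c2 j).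
  split; [rewrite Hc1, Hc2; reflexivity|]. intros x. rewrite trunc_plus, Hf, Hg. reflexivity.
Qed.

Lemma is_poly_lead_scal d L k (f : R -> R) :
  is_poly_lead d L f -> is_poly_lead d (k * L) (fun x => k * f x).
Proof.
  intros [c [Hc Hf]]. exists (fun j => k * c j).
  split; [rewrite Hc; reflexivity|]. intros x. rewrite trunc_scal, Hf. reflexivity.
Qed.

Lemma is_poly_lead_mulx d L (f : R -> R) :
  is_poly_lead d L f -> is_poly_lead (S d) L (fun x => x * f x).
Proof.
  intros [c [Hc Hf]]. exists (mulX c). split; [exact Hc|].
  intros x. rewrite trunc_divX, Hf. change (divX (mulX c)) with c. simpl. ring.
Qed.

Lemma is_poly_lead_S d (f : R -> R) : is_poly d f -> is_poly_lead (S d) 0 f.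
Proof.
  intros [L [c [_ Hf]]].
  set (c' := fun j => if (j <=? d)%nat then c j else 0).
  assert (Htop : c' (S d) = 0).
  { unfold c'. rewrite (proj2 (Nat.leb_gt (S d) d)) by lia. reflexivity. }
  exists c'. split; [exact Htop|]. intros x.
  change (f x = trunc c' (S d) x + c' (S d) * x ^ S d).
  rewrite Htop, Rmult_0_l, Rplus_0_r, Hf. apply trunc_ext. intros j Hj.
  unfold c'. rewrite (proj2 (Nat.leb_le j d)) by lia. reflexivity.
Qed.

Lemma is_poly_ext d (f g : R -> R) : (forall x, f x = g x) -> is_poly d f -> is_poly d g.
Proof. intros Hfg [L HL]. exists L. exact (is_poly_lead_ext d L L f g eq_refl Hfg HL). Qed.

Lemma is_poly_le d d' (f : R -> R) : (d <= d')%nat -> is_poly d f -> is_poly d' f.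
Proof.
  induction 1 as [|d' _ IH]; [tauto|]. intros Hf. exists 0. apply is_poly_lead_S, IH, Hf.
Qed.

Lemma is_poly_plus d (f g : R -> R) :
  is_poly d f -> is_poly d g -> is_poly d (fun x => f x + g x).
Proof. intros [L1 H1] [L2 H2]. exists (L1 + L2). apply is_poly_lead_plus; assumption. Qed.

Lemma is_poly_scal d k (f : R -> R) : is_poly d f -> is_poly d (fun x => k * f x).
Proof. intros [L H]. exists (k * L). apply is_poly_lead_scal, H. Qed.

Lemma is_poly_mulx d (f : R -> R) : is_poly d f -> is_poly (S d) (fun x => x * f x).
Proof. intros [L H]. exists L. apply is_poly_lead_mulx, H. Qed.

Lemma is_poly_sum d (F : nat -> R -> R) m :
  (forall j, (j <= m)%nat -> is_poly d (F j)) ->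
  is_poly d (fun x => sum_f_R0 (fun j => F j x) m).
Proof.
  induction m as [|m IH]; intros HF; [apply HF; lia|].
  apply is_poly_plus; [apply IH; intros; apply HF; lia|apply HF; lia].
Qed.

Lemma is_poly_conv a (P : R -> nat -> R) m :
  (forall l, (l <= m)%nat -> is_poly (Nat.div2 l) (fun x => P x l)) ->
  is_poly (Nat.div2 m) (fun x => conv a (P x) m).
Proof.
  intros HP. apply (is_poly_sum _ (fun j x => a j * P x (m - j)%nat)).
  intros j Hj. apply is_poly_scal, (is_poly_le (Nat.div2 (m - j))).
  - apply Nat.div2_le_mono. lia.
  - apply HP. lia.
Qed.

Lemma radial_coef_poly Z w m : is_poly (Nat.div2 m) (fun e => radial_coef Z w e m).
Proof.
  induction m as [m IH] using Wf_nat.lt_wf_ind.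
  destruct m as [|[|m]].
  - exists 1. apply is_poly_lead_const.
  - exists (- Z).
    apply (is_poly_lead_ext _ (- Z) _ (fun _ => - Z)); [reflexivity| |apply is_poly_lead_const].
    intros e. rewrite radial_coef_S. unfold radial_step.
    change (radial_coef Z w e 0) with 1. simpl. field.
  - set (D := INR (S (S m)) * INR (S (S (S m)))).
    assert (HD : D <> 0) by (apply Rmult_integral_contrapositive; split; apply not_0_INR; lia).
    apply (is_poly_ext _ (fun e => -2 * Z / D * radial_coef Z w e (S m)
        + (2 / D * conv (even_coef w) (radial_coef Z w e) m
           + -2 / D * (e * radial_coef Z w e m)))).
    { intros e. rewrite radial_coef_SS. fold D. field. exact HD. }
    apply is_poly_plus; [|apply is_poly_plus]; apply is_poly_scal.
    + apply (is_poly_le (Nat.div2 (S m))); [apply (Nat.div2_le_mono (S m) (S (S m))); lia|].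
      apply IH. lia.
    + apply (is_poly_le (Nat.div2 m)); [simpl; lia|].
      apply is_poly_conv. intros l Hl. apply IH. lia.
    + apply is_poly_mulx, IH. lia.
Qed.

Lemma radial_coef_odd_poly Z w k : is_poly k (fun e => radial_coef Z w e (2 * k + 1)).
Proof.
  pose proof (radial_coef_poly Z w (2 * k + 1)) as H.
  rewrite Nat.add_1_r, Nat.div2_succ_double in H. rewrite Nat.add_1_r. exact H.
Qed.

Lemma radial_coef_even_lead Z w k :
  is_poly_lead k ((-2) ^ k / INR (fact (2 * k + 1)))
               (fun e => radial_coef Z w e (2 * k)).
Proof.
  induction k as [|k IH].
  - apply (is_poly_lead_ext _ 1 _ (fun _ => 1)); [simpl; field|reflexivity|].
    apply is_poly_lead_const.
  - set (L := (-2) ^ k / INR (fact (2 * k + 1))) in IH.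
    set (D := INR (S (S (2 * k))) * INR (S (S (S (2 * k))))).
    assert (HD : D <> 0) by (apply Rmult_integral_contrapositive; split; apply not_0_INR; lia).
    apply (is_poly_lead_ext _ (-2 * Z / D * 0 + (2 / D * 0 + -2 / D * L))
      _ (fun e => -2 * Z / D * radial_coef Z w e (S (2 * k))
        + (2 / D * conv (even_coef w) (radial_coef Z w e) (2 * k)
           + -2 / D * (e * radial_coef Z w e (2 * k))))).
    + unfold L. replace (2 * S k + 1)%nat with (S (S (S (2 * k)))) by lia.
      replace (2 * k + 1)%nat with (S (2 * k)) by lia.
      unfold D. rewrite !fact_simpl, !mult_INR. simpl pow. field.
      repeat split; first [apply INR_fact_neq_0|apply not_0_INR; lia].
    + intros e. replace (2 * S k)%nat with (S (S (2 * k))) by lia.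
      rewrite radial_coef_SS. fold D. field. exact HD.
    + apply is_poly_lead_plus; [|apply is_poly_lead_plus];
        apply is_poly_lead_scal; [apply is_poly_lead_S..|apply is_poly_lead_mulx, IH].
      * rewrite <- Nat.add_1_r. apply radial_coef_odd_poly.
      * rewrite <- (Nat.div2_double k) at 1. apply is_poly_conv.
        intros l _. apply radial_coef_poly.
Qed.

Lemma radial_step_first_coefs Z w e a :
  (forall m, a (S m) = radial_step Z w e a m) ->
  let z0 := a 0%nat in
  let w0 := w 0%nat in
  let w2 := w 1%nat in
  a 1%nat = - Z * z0 /\
  a 2%nat = - / 3 * e * z0 + / 3 * (Z ^ 2 + w0) * z0 /\
  a 3%nat = 2 / 9 * Z * e * z0 - (Z ^ 3 / 18 + 2 / 9 * Z * w0) * z0 /\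
  a 4%nat = / 30 * e ^ 2 * z0 - (Z ^ 2 / 18 + w0 / 15) * e * z0
            + (Z ^ 4 / 180 + Z ^ 2 * w0 / 18 + w0 ^ 2 / 30 + w2 / 10) * z0 /\
  a 5%nat = - (23 / 1350) * Z * e ^ 2 * z0
            + (Z ^ 3 / 135 + 23 / 675 * w0 * Z) * e * z0
            - (Z ^ 5 / 2700 + Z ^ 3 * w0 / 135 + 23 / 1350 * Z * w0 ^ 2
               + 11 / 150 * Z * w2) * z0.
Proof.
  intros Ha. cbv zeta.
  assert (h1 : a 1%nat = - Z * a 0%nat).
  { rewrite Ha. unfold radial_step, mulX. simpl. field. }
  assert (h2 : a 2%nat = - / 3 * e * a 0%nat + / 3 * (Z ^ 2 + w 0%nat) * a 0%nat).
  { rewrite Ha. unfold radial_step, conv, even_coef, mulX. simpl. rewrite h1. field. }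
  assert (h3 : a 3%nat = 2 / 9 * Z * e * a 0%nat
                         - (Z ^ 3 / 18 + 2 / 9 * Z * w 0%nat) * a 0%nat).
  { rewrite Ha. unfold radial_step, conv, even_coef, mulX. simpl. rewrite h2, h1. field. }
  assert (h4 : a 4%nat = / 30 * e ^ 2 * a 0%nat - (Z ^ 2 / 18 + w 0%nat / 15) * e * a 0%nat
                         + (Z ^ 4 / 180 + Z ^ 2 * w 0%nat / 18 + w 0%nat ^ 2 / 30
                            + w 1%nat / 10) * a 0%nat).
  { rewrite Ha. unfold radial_step, conv, even_coef, mulX. simpl. rewrite h3, h2, h1. field. }
  repeat split; try assumption.
  rewrite Ha. unfold radial_step, conv, even_coef, mulX. simpl. rewrite h4, h3, h2, h1. field.
Qed.

Lemma trunc_mul_sum c N x z :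
  trunc c (S N) x * z = sum_f_R0 (fun j => c j * x ^ j * z) N.
Proof. rewrite trunc_sum_f_R0, Rmult_comm, scal_sum. reflexivity. Qed.

Theorem lemma5p7 (Z : R) (W : R -> R) (w : nat -> R) (n : nat)
  (Rad : nat -> R -> R) (eps : nat -> R) (zeta : nat -> nat -> R) :
  0 < Z ->
  W_at_hyp W w ->
  (forall i, (i < n)%nat -> radial_eigen Z W (eps i) (Rad i)) ->
  (forall i, (i < n)%nat -> singular_expansion (Rad i) (fun j => zeta j i)) ->
  (exists mu nu : nat -> nat -> R,
     (forall k, (k < n)%nat ->   (* 0 <= k <= n-1 *)
        mu k k <> 0 /\
        forall i, (i < n)%nat ->
          zeta (2 * k)%nat i = sum_f_R0 (fun j => mu k j * eps i ^ j * zeta 0%nat i) k /\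
          zeta (2 * k + 1)%nat i = sum_f_R0 (fun j => nu k j * eps i ^ j * zeta 0%nat i) k)) /\
  (forall i, (i < n)%nat ->
     let z0 := zeta 0%nat i in
     let e := eps i in
     let w0 := w 0%nat in
     let w2 := w 1%nat in
     zeta 1%nat i = - Z * z0 /\
     zeta 2%nat i = - / 3 * e * z0 + / 3 * (Z ^ 2 + w0) * z0 /\
     zeta 3%nat i = 2 / 9 * Z * e * z0 - (Z ^ 3 / 18 + 2 / 9 * Z * w0) * z0 /\
     zeta 4%nat i = / 30 * e ^ 2 * z0 - (Z ^ 2 / 18 + w0 / 15) * e * z0
                    + (Z ^ 4 / 180 + Z ^ 2 * w0 / 18 + w0 ^ 2 / 30 + w2 / 10) * z0 /\
     zeta 5%nat i = - (23 / 1350) * Z * e ^ 2 * z0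
                    + (Z ^ 3 / 135 + 23 / 675 * w0 * Z) * e * z0
                    - (Z ^ 5 / 2700 + Z ^ 3 * w0 / 135 + 23 / 1350 * Z * w0 ^ 2
                       + 11 / 150 * Z * w2) * z0).
Proof.
  intros _ HW Hrad Hsing.
  assert (Hrec : forall i, (i < n)%nat ->
            forall m, zeta (S m) i = radial_step Z w (eps i) (fun j => zeta j i) m).
  { intros i Hi.
    exact (singular_coef_rec Z W w (eps i) (Rad i) (fun j => zeta j i)
             HW (Hrad i Hi) (Hsing i Hi)). }
  split; [|intros i Hi; exact (radial_step_first_coefs _ _ _ _ (Hrec i Hi))].
  destruct (functional_choice (fun k c => c k = (-2) ^ k / INR (fact (2 * k + 1)) /\
              forall e, radial_coef Z w e (2 * k) = trunc c (S k) e)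
              (radial_coef_even_lead Z w)) as [mu Hmu].
  destruct (functional_choice (fun k c =>
              forall e, radial_coef Z w e (2 * k + 1) = trunc c (S k) e)) as [nu Hnu].
  { intros k. destruct (radial_coef_odd_poly Z w k) as [L [c [_ Hc]]]. exists c. exact Hc. }
  exists mu, nu. intros k _. split.
  - rewrite (proj1 (Hmu k)). apply Rmult_integral_contrapositive_currified.
    + apply pow_nonzero. lra.
    + apply Rinv_neq_0_compat, INR_fact_neq_0.
  - intros i Hi.
    rewrite (radial_coef_scaled _ _ _ _ (Hrec i Hi) (2 * k)),
            (radial_coef_scaled _ _ _ _ (Hrec i Hi) (2 * k + 1)), (proj2 (Hmu k)), Hnu.
    split; apply trunc_mul_sum.
Qed.
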